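(* Fix an architecture $(\mathbf d,\mathbf k,\mathbf s)$ of depth $N$, a loss $\ell:\mathbb{R}^{d_N}\times\mathbb{R}^{d_N}\to\mathbb{R}$, and data $X=(x_1,\dots,x_m)\in\mathbb{R}^{d_0\times m}$, $Y=(y_1,\dots,y_m)\in\mathbb{R}^{d_N\times m}$, and let $\mathcal{L}(\vec w)=\sum_{i=1}^m\ell(\Pi(\vec w)x_i,y_i)$. Assume that $XX^\top$ has full rank and that there is a constant $c\in\mathbb{R}$ such that for all $x\in\mathbb{R}^{d_0}$, $y\in\mathbb{R}^{d_N}$ and all $W\in\mathbb{R}^{d_N\times d_0}$, \[ \|Wx-y\|_1\le\ell(Wx,y)+c. \] Then there exists a non-decreasing function $g:\mathbb{R}\to\mathbb{R}_{\ge0}$ such that $\|\pi(\vec w)\|_1\le g(\mathcal{L}(\vec w))$ for all $\vec w\in\mathbb{R}^{\sum_{i=1}^N k_i}$.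
   Context: An architecture of depth $N$ is a triple $(\mathbf d,\mathbf k,\mathbf s)=((d_0,\dots,d_N),(k_1,\dots,k_N),(s_1,\dots,s_N))$ of positive integers with $d_i=\frac{d_{i-1}-k_i}{s_i}+1$. For a filter $w\in\mathbb{R}^{k}$ and stride $s$, the convolutional matrix $\Pi_{(d',d''),k,s}(w)\in\mathbb{R}^{d''\times d'}$ has entries $W_{j,(j-1)s+n}=w_n$ ($j\le d''$, $n\le k$) and zeros elsewhere. For $\vec w=(w^{(1)},\dots,w^{(N)})$, $w^{(i)}\in\mathbb{R}^{k_i}$, $\Pi(\vec w):=W_N\cdots W_1$ with $W_i=\Pi_{(d_{i-1},d_i),k_i,s_i}(w^{(i)})$; this is a convolutional matrix with stride $\prod_i s_i$ and filter width $k_v=k_1+\sum_{i=2}^N(k_i-1)\prod_{m=1}^{i-1}s_m$, and its filter is denoted $\pi(\vec w)\in\mathbb{R}^{k_v}$. $\|\cdot\|_1$ is the $\ell_1$-norm of a vector. *)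

From HB Require Import structures.
From mathcomp Require Import all_boot all_order all_algebra.
Unset Printing Implicit Defensive.
Import Order.TTheory GRing.Theory Num.Theory.
Local Open Scope ring_scope.

(* Layers are 0-indexed: layer i (0 <= i < N) of the paper's layer i+1 has
   filter width k i, stride s i, and maps R^(d i) to R^(d i.+1).
   So d 0, ..., d N are the paper's d_0, ..., d_N. *)

(* (d,k,s) is an architecture of depth N: all entries positive integers and
   d_{i} = (d_{i-1} - k_i)/s_i + 1, written multiplicatively (with d_i >= 1)
   as d_{i-1} = (d_i - 1) * s_i + k_i. *)
Definition architecture (N : nat) (d k s : nat -> nat) : Prop :=
  (0 < N)%N /\
  (forall i, (i <= N)%N -> (0 < d i)%N) /\
  (forall i, (i < N)%N ->
     [/\ (0 < k i)%N, (0 < s i)%N & d i = ((d i.+1 - 1) * s i + k i)%N]).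

(* Convolutional matrix Pi_{(d',d''),k,s}(w) in R^{d'' x d'}:
   (0-indexed) entry (j, j*s + n) is w_n for n < k, zeros elsewhere. *)
Definition conv_mx {R : pzRingType} (d' d'' k s : nat) (w : 'rV[R]_k)
  : 'M[R]_(d'', d') :=
  \matrix_(j < d'', c < d')
    if (j * s <= c)%N then
      match insub (c - j * s)%N : option 'I_k with
      | Some n => w 0 n
      | None => 0
      end
    else 0.

Fixpoint Pi_n {R : pzRingType} (d k s : nat -> nat)
  (w : forall i : nat, 'rV[R]_(k i)) (n : nat) : 'M[R]_(d n, d 0%N) :=
  match n with
  | 0 => 1%:M
  | n'.+1 => conv_mx (d n') (d n'.+1) (k n') (s n') (w n') *m Pi_n d k s w n'
  end.

Definition Pi {R : pzRingType} (N : nat) (d k s : nat -> nat)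
  (w : forall i : nat, 'rV[R]_(k i)) : 'M[R]_(d N, d 0%N) := Pi_n d k s w N.

Definition kv (N : nat) (k s : nat -> nat) : nat :=
  (k 0 + \sum_(1 <= i < N) (k i - 1) * \prod_(j < i) s j)%N.

(* total entry accessor (0 outside range) *)
Definition mxget {R : pzRingType} {m n : nat} (M : 'M[R]_(m, n)) (i j : nat) : R :=
  match insub i : option 'I_m, insub j : option 'I_n with
  | Some a, Some b => M a b
  | _, _ => 0
  end.

(* pi(w): the filter of the convolutional matrix Pi(w) (stride prod s_i, width kv),
   i.e. the first kv entries of its first row. *)
Definition e2e_filter {R : pzRingType} (N : nat) (d k s : nat -> nat)
  (w : forall i : nat, 'rV[R]_(k i)) : 'rV[R]_(kv N k s) :=
  \row_(n < kv N k s) mxget (Pi N d k s w) 0 n.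

Definition norm1 {R : numDomainType} {m n : nat} (M : 'M[R]_(m, n)) : R :=
  \sum_(i < m) \sum_(j < n) `|M i j|.

Definition Lemp {R : pzRingType} (N : nat) (d k s : nat -> nat) {m : nat}
  (l : 'cV[R]_(d N) -> 'cV[R]_(d N) -> R)
  (X : 'M[R]_(d 0%N, m)) (Y : 'M[R]_(d N, m))
  (w : forall i : nat, 'rV[R]_(k i)) : R :=
  \sum_(i < m) l (Pi N d k s w *m col i X) (col i Y).

From HB Require Import structures.
From mathcomp Require Import all_boot all_order all_algebra.
Import Order.TTheory GRing.Theory Num.Theory.
Local Open Scope ring_scope.

(* Since X X^T is invertible, X has the right inverse A = X^T (X X^T)^-1, so
   Pi(w) = (Pi(w) X) A and ||Pi(w)||_1 <= ||Pi(w) X||_1 ||A||_1.  The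
   coercivity of the loss bounds ||Pi(w) X - Y||_1, hence ||Pi(w) X||_1, by
   L(w) + m c + ||Y||_1, and every entry of the filter pi(w) is an entry of
   Pi(w).  Nothing about the convolutional structure is needed. *)

Section Norm1.
Context {R : numDomainType}.

Lemma norm1_ge0 {p q} (M : 'M[R]_(p, q)) : 0 <= norm1 M.
Proof. by apply: sumr_ge0 => i _; apply: sumr_ge0. Qed.

Lemma ler_norm1D {p q} (A B : 'M[R]_(p, q)) : norm1 (A + B) <= norm1 A + norm1 B.
Proof.
rewrite /norm1 -big_split; apply: ler_sum => i _.
rewrite -big_split; apply: ler_sum => j _; rewrite mxE; exact: ler_normD.
Qed.

Lemma norm1_sum_col {p q} (M : 'M[R]_(p, q)) :
  norm1 M = \sum_(j < q) norm1 (col j M).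
Proof.
rewrite /norm1 exchange_big; apply: eq_bigr => j _.
by apply: eq_bigr => i _; rewrite big_ord1 mxE.
Qed.

Lemma ler_norm1_row {p q} (M : 'M[R]_(p, q)) a :
  \sum_(j < q) `|M a j| <= norm1 M.
Proof.
rewrite /norm1 (bigD1 a) //= lerDl.
by apply: sumr_ge0 => i _; apply: sumr_ge0.
Qed.

Lemma ler_norm1_entry {p q} (M : 'M[R]_(p, q)) a b : `|M a b| <= norm1 M.
Proof.
apply: le_trans (ler_norm1_row M a); rewrite (bigD1 b) //= lerDl.
exact: sumr_ge0.
Qed.

Lemma ler_norm1_mxget {p q} (M : 'M[R]_(p, q)) i j : `|mxget M i j| <= norm1 M.
Proof.
rewrite /mxget; case: insubP => [a _ _|_]; last by rewrite normr0 norm1_ge0.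
case: insubP => [b _ _|_]; last by rewrite normr0 norm1_ge0.
exact: ler_norm1_entry.
Qed.

Lemma ler_norm1_row_mxget {p q} n (M : 'M[R]_(p, q)) i :
  norm1 (\row_(j < n) mxget M i j) <= n%:R * norm1 M.
Proof.
rewrite [norm1 _]big_ord1 mulr_natl -[n in _ *+ n]card_ord -sumr_const.
by apply: ler_sum => j _; rewrite mxE ler_norm1_mxget.
Qed.

Lemma ler_norm1_mulmx {p q r} (B : 'M[R]_(p, q)) (A : 'M[R]_(q, r)) :
  norm1 (B *m A) <= norm1 B * norm1 A.
Proof.
rewrite [norm1 B * _]mulr_suml; apply: ler_sum => i _.
apply: (@le_trans _ _ (\sum_(j < r) \sum_(k < q) `|B i k| * `|A k j|)).
  apply: ler_sum => j _; rewrite mxE; apply: le_trans (ler_norm_sum _ _ _) _.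
  by apply: ler_sum => k _; rewrite normrM.
rewrite exchange_big mulr_suml; apply: ler_sum => k _.
rewrite -mulr_sumr; apply: ler_wpM2l => //.
exact: ler_norm1_row.
Qed.

Lemma ler_norm1_rinv {p q m} (M : 'M[R]_(q, p)) {X : 'M[R]_(p, m)} {A} :
  X *m A = 1%:M -> norm1 M <= norm1 (M *m X) * norm1 A.
Proof. by move=> XA1; rewrite -{1}(mulmx1 M) -XA1 mulmxA ler_norm1_mulmx. Qed.

Lemma ler_norm1_mulmx_loss {p q m} (l : 'cV[R]_q -> 'cV[R]_q -> R) (c : R)
    (X : 'M[R]_(p, m)) (Y : 'M[R]_(q, m)) (W : 'M[R]_(q, p)) :
  (forall x y, norm1 (W *m x - y) <= l (W *m x) y + c) ->
  norm1 (W *m X)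
    <= \sum_(i < m) l (W *m col i X) (col i Y) + (m%:R * c + norm1 Y).
Proof.
move=> loss_ge_l1; rewrite addrA norm1_sum_col [norm1 Y]norm1_sum_col.
rewrite mulr_natl -[m in _ *+ m]card_ord -sumr_const -!big_split.
apply: ler_sum => i _; rewrite [col i _]colE -mulmxA -colE.
rewrite -[Z in norm1 Z](subrK (col i Y)).
apply: le_trans (ler_norm1D _ _) _.
by rewrite lerD2r loss_ge_l1.
Qed.

End Norm1.

Lemma mulmx_gram_rinv {F : fieldType} {p m} {X : 'M[F]_(p, m)} :
  \rank (X *m X^T) = p -> X *m (X^T *m invmx (X *m X^T)) = 1%:M.
Proof.
by move=> rank_p; rewrite mulmxA mulmxV // -row_free_unit /row_free rank_p.
Qed.

Theorem corollary3p7 (R : realFieldType) (N : nat) (d k s : nat -> nat)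
  (m : nat) (l : 'cV[R]_(d N) -> 'cV[R]_(d N) -> R)
  (X : 'M[R]_(d 0%N, m)) (Y : 'M[R]_(d N, m)) :
  architecture N d k s ->
  \rank (X *m X^T) = d 0%N ->
  (exists c : R, forall (x : 'cV[R]_(d 0%N)) (y : 'cV[R]_(d N))
       (W : 'M[R]_(d N, d 0%N)),
       norm1 (W *m x - y) <= l (W *m x) y + c) ->
  exists g : R -> R,
    [/\ (forall t, 0 <= g t),
        (forall a b, a <= b -> g a <= g b) &
        (forall w : forall i : nat, 'rV[R]_(k i),
            norm1 (e2e_filter N d k s w) <= g (Lemp N d k s l X Y w))].
Proof.
move=> _ rank_XXt [c loss_ge_l1].
have XA1 := mulmx_gram_rinv rank_XXt.
set A := X^T *m _ in XA1.
set C := (kv N k s)%:R * norm1 A.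
have C_ge0 : 0 <= C by rewrite mulr_ge0 ?ler0n ?norm1_ge0.
set K := m%:R * c + norm1 Y.
exists (fun t => C * Num.max 0 (t + K)); split.
- by move=> t; rewrite mulr_ge0 // le_max lexx.
- move=> a b le_ab; rewrite ler_wpM2l //.
  by rewrite ge_max le_max lexx le_max lerD2r le_ab orbT.
move=> w; set P := Pi N d k s w.
apply: le_trans (ler_norm1_row_mxget _ P 0) _.
rewrite /C -mulrA ler_wpM2l ?ler0n //.
rewrite mulrC; apply: le_trans (ler_norm1_rinv P XA1) _.
rewrite ler_wpM2r ?norm1_ge0 // le_max; apply/orP; right.
exact: ler_norm1_mulmx_loss (fun x y => loss_ge_l1 x y P).
Qed.
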